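(* Let $\mathbb{D}$ be a division ring, let $2\le m,n<\infty$, let $P$ be an $n\times m$ matrix over $\mathbb{D}$ with $\operatorname{rank}P = r$, and let $\mathcal{A}=\mathfrak{M}(\mathbb{D}, m, n, P)$. Then: (1) if $r\ge 1$, then $\mathcal{A}$ is generated by its idempotents as a $\mathbb{D}$-algebra; (2) if $r\ge 2$, then $\mathcal{A}$ is generated by its idempotents as a ring; (3) if $r\ge 2$ and $\operatorname{char}\mathbb{D}\ne 2$, then $\mathcal{A}$ is additively spanned by Jordan products of idempotents, i.e. $\mathcal{A}$ equals the additive subgroup generated by all elements $e\circ f = e\bullet f + f\bullet e$ with $e,f\in\mathcal{A}$ idempotents.
   Context: $\mathfrak{M}(\mathbb{D}, m, n, P)$ denotes the set of all $m\times n$ matrices over the division ring $\mathbb{D}$, with entrywise addition, multiplication $A\bullet B = APB$, and (left) scalar multiplication by elements of $\mathbb{D}$ entrywise. An element $e$ is an idempotent if $e\bullet e = e$. *)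

From HB Require Import structures.
From mathcomp Require Import all_boot all_order all_algebra.
Set Implicit Arguments. Unset Strict Implicit. Unset Printing Implicit Defensive.
Import GRing.Theory.
Local Open Scope ring_scope.

(* D : unitRingType is a division ring when every nonzero element is a unit
   (unitRingType is already non-trivial: 1 != 0). *)
Definition division_ring (D : unitRingType) : Prop :=
  forall x : D, x != 0 -> x \is a GRing.unit.

Definition rows_left_indep (D : unitRingType) (k p : nat) (M : 'M[D]_(k, p)) : Prop :=
  forall c : 'rV[D]_k, c *m M = 0 -> c = 0.

(* rank (= left row rank) of a matrix over a division ring:
   the maximal number of left linearly independent rows. *)
Definition dr_rank (D : unitRingType) (n m : nat) (P : 'M[D]_(n, m)) (r : nat) : Prop :=
  (exists f : 'I_r -> 'I_n, injective f /\ rows_left_indep (rowsub f P)) /\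
  (forall (k : nat) (f : 'I_k -> 'I_n), injective f -> rows_left_indep (rowsub f P) -> (k <= r)%N).

(* The product of M(D, m, n, P): A • B = A P B. *)
Definition bmul (D : unitRingType) (m n : nat) (P : 'M[D]_(n, m))
  (A B : 'M[D]_(m, n)) : 'M[D]_(m, n) := A *m P *m B.

Definition idemP (D : unitRingType) (m n : nat) (P : 'M[D]_(n, m)) (e : 'M[D]_(m, n)) : Prop :=
  bmul P e e = e.

Inductive gen_alg (D : unitRingType) (m n : nat) (P : 'M[D]_(n, m))
  (S : 'M[D]_(m, n) -> Prop) : 'M[D]_(m, n) -> Prop :=
  | ga_base x : S x -> gen_alg P S x
  | ga_zero : gen_alg P S 0
  | ga_add x y : gen_alg P S x -> gen_alg P S y -> gen_alg P S (x + y)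
  | ga_opp x : gen_alg P S x -> gen_alg P S (- x)
  | ga_mul x y : gen_alg P S x -> gen_alg P S y -> gen_alg P S (bmul P x y)
  | ga_scale (d : D) x : gen_alg P S x -> gen_alg P S (d *: x).

Inductive gen_ring (D : unitRingType) (m n : nat) (P : 'M[D]_(n, m))
  (S : 'M[D]_(m, n) -> Prop) : 'M[D]_(m, n) -> Prop :=
  | gr_base x : S x -> gen_ring P S x
  | gr_zero : gen_ring P S 0
  | gr_add x y : gen_ring P S x -> gen_ring P S y -> gen_ring P S (x + y)
  | gr_opp x : gen_ring P S x -> gen_ring P S (- x)
  | gr_mul x y : gen_ring P S x -> gen_ring P S y -> gen_ring P S (bmul P x y).

Inductive gen_add (V : zmodType) (S : V -> Prop) : V -> Prop :=
  | gd_base x : S x -> gen_add S x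
  | gd_zero : gen_add S 0
  | gd_add x y : gen_add S x -> gen_add S y -> gen_add S (x + y)
  | gd_opp x : gen_add S x -> gen_add S (- x).

Definition jordan_idem (D : unitRingType) (m n : nat) (P : 'M[D]_(n, m))
  (x : 'M[D]_(m, n)) : Prop :=
  exists e f, idemP P e /\ idemP P f /\ x = bmul P e f + bmul P f e.

From mathcomp Require Import all_boot all_order all_algebra.
Set Implicit Arguments. Unset Strict Implicit. Unset Printing Implicit Defensive.
Import GRing.Theory.
Local Open Scope ring_scope.

(* Every matrix is a sum of rank-one matrices u y, and (u z) • (v w) = u (z P v) w,
   so u w is idempotent when w P u = 1; over a division ring such a w exists
   whenever P u != 0, and every other u is a difference of such columns.  If
   moreover z P u = 0, then u z = u (w + z) - u w is a difference of idempotents.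
   For rank P >= 1, one pair (u0, w0) with u0 a basis column already gives every
   u y = (u w0) • (u0 y) using D-scalars.  For rank P >= 2, a normalised pair
   (u1, w1) extends to a biorthogonal system (u1, u2; w1, w2), and the matrix
   units u_i w_j write every u1 y as a ring expression in idempotents or, when 2
   is invertible, as a sum of Jordan products of idempotents. *)

Section RankOne.
Variables (D : unitRingType) (m n : nat) (P : 'M[D]_(n, m)).

(* The pairing takes values in 'M_1 rather than in D, so that u *m a *m w is
   the rank-one matrix u a w with the scalar a in the middle: D need not be
   commutative. *)
Definition pairing (w : 'rV[D]_n) (u : 'cV[D]_m) : 'M[D]_1 := w *m P *m u.

Lemma pairingDl w1 w2 u : pairing (w1 + w2) u = pairing w1 u + pairing w2 u.
Proof. by rewrite /pairing !mulmxDl. Qed.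

Lemma pairingBl w1 w2 u : pairing (w1 - w2) u = pairing w1 u - pairing w2 u.
Proof. by rewrite /pairing !mulmxBl. Qed.

Lemma pairingDr w u1 u2 : pairing w (u1 + u2) = pairing w u1 + pairing w u2.
Proof. by rewrite /pairing mulmxDr. Qed.

Lemma pairingBr w u1 u2 : pairing w (u1 - u2) = pairing w u1 - pairing w u2.
Proof. by rewrite /pairing mulmxBr. Qed.

Lemma pairingMl (a : 'M[D]_1) w u : pairing (a *m w) u = a *m pairing w u.
Proof. by rewrite /pairing !mulmxA. Qed.

Lemma pairingMr (a : 'M[D]_1) w u : pairing w (u *m a) = pairing w u *m a.
Proof. by rewrite /pairing !mulmxA. Qed.

Lemma bmul_rank1 u z v w : bmul P (u *m z) (v *m w) = u *m pairing z v *m w.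
Proof. by rewrite /bmul /pairing !mulmxA. Qed.

Lemma idem_rank1 u w : pairing w u = 1%:M -> idemP P (u *m w).
Proof. by move=> wu1; rewrite /idemP bmul_rank1 wu1 mulmx1. Qed.

Lemma gen_ring_alg S x : gen_ring P S x -> gen_alg P S x.
Proof. by elim=> *; constructor. Qed.

Lemma gen_ring_sub S x y : gen_ring P S x -> gen_ring P S y -> gen_ring P S (x - y).
Proof. by move=> Sx Sy; apply: gr_add => //; apply: gr_opp. Qed.

Lemma gen_ring_idem_rank1_orthr u w z :
  pairing w u = 1%:M -> pairing z u = 0 -> gen_ring P (idemP P) (u *m z).
Proof.
move=> wu1 zu0; rewrite -[u *m z](addKr (u *m w)) addrC -mulmxDr.
apply: gen_ring_sub; apply/gr_base/idem_rank1 => //.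
by rewrite pairingDl wu1 zu0 addr0.
Qed.

Lemma gen_ring_idem_rank1_orthl u w v :
  pairing w u = 1%:M -> pairing w v = 0 -> gen_ring P (idemP P) (v *m w).
Proof.
move=> wu1 wv0; rewrite -[v *m w](addKr (u *m w)) addrC -mulmxDl.
apply: gen_ring_sub; apply/gr_base/idem_rank1 => //.
by rewrite pairingDr wu1 wv0 addr0.
Qed.

(* The witnesses are e = u w and f = u' w'' with w'' P u' = 1 and w'' P u = a,
   so that e • f = 0 and f • e = u' a w. *)
Lemma jordan_idem_rank1 u u' w w' a :
  pairing w' u' = 1%:M -> pairing w u' = 0 -> pairing w u = 1%:M ->
  jordan_idem P (u' *m a *m w).
Proof.
move=> w'u'1 wu'0 wu1.
pose w'' := w' + (a - pairing w' u) *m w.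
have w''u'1 : pairing w'' u' = 1%:M by rewrite pairingDl pairingMl wu'0 mulmx0 addr0.
have w''u : pairing w'' u = a by rewrite pairingDl pairingMl wu1 mulmx1 addrC subrK.
exists (u *m w), (u' *m w''); split; [exact: idem_rank1 | split; first exact: idem_rank1].
by rewrite !bmul_rank1 wu'0 mulmx0 mul0mx add0r w''u.
Qed.

End RankOne.

Lemma gen_add_sub (V : zmodType) (S : V -> Prop) x y :
  gen_add S x -> gen_add S y -> gen_add S (x - y).
Proof. by move=> Sx Sy; apply: gd_add => //; apply: gd_opp. Qed.

Lemma mx_sum_rank1 (R : pzRingType) (m n : nat) (x : 'M[R]_(m, n)) :
  x = \sum_(i < m) delta_mx i 0 *m row i x.
Proof.
rewrite -[x in LHS]mul1mx mx1_sum_delta mulmx_suml.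
by apply: eq_bigr => i _; rewrite rowE mulmxA mul_delta_mx.
Qed.

Lemma mul_delta_col_mx11 (R : pzRingType) (m : nat) (l : 'I_m) (a : 'M[R]_1) :
  (delta_mx l 0 : 'cV[R]_m) *m a = a 0 0 *: delta_mx l 0.
Proof.
apply/matrixP => i j; rewrite !ord1 !mxE big_ord1 !mxE.
by case: (i == l); rewrite ?mul1r ?mulr1 ?mul0r ?mulr0.
Qed.

Lemma mx_neq0_delta_col (R : pzRingType) (n m : nat) (Q : 'M[R]_(n, m)) :
  Q != 0 -> exists l, Q *m (delta_mx l 0 : 'cV[R]_m) != 0.
Proof.
case/matrix0Pn=> i [j Qij]; exists j; apply/cV0Pn; exists i.
by rewrite -colE mxE.
Qed.

Section DivisionRing.
Variables (D : unitRingType) (m n : nat).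
Hypothesis D_division : division_ring D.

Lemma pairing_unit (Q : 'M[D]_(n, m)) u :
  Q *m u != 0 -> exists w, pairing Q w u = 1%:M.
Proof.
case/cV0Pn=> k Quk; exists (((Q *m u) k 0)^-1 *: (delta_mx 0 k : 'rV[D]_n)).
rewrite /pairing -mulmxA -scalemxAl -rowE [row k _]mx11_scalar [row k _ 0 0]mxE.
by rewrite scale_scalar_mx mulVr // D_division.
Qed.

Lemma cV_left_annihilator k (A : 'cV[D]_k) :
  (1 < k)%N -> exists2 c : 'rV[D]_k, c != 0 & c *m A = 0.
Proof.
move=> k_gt1; pose i0 : 'I_k := Ordinal (ltnW k_gt1); pose i1 : 'I_k := Ordinal k_gt1.
have delta_neq0 i : (delta_mx 0 i : 'rV[D]_k) != 0.
  by apply/rV0Pn; exists i; rewrite mxE !eqxx oner_neq0.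
have [A0|A0] := eqVneq (A i0 0) 0.
  by exists (delta_mx 0 i0); rewrite // -rowE [row _ _]mx11_scalar mxE A0 raddf0.
exists (delta_mx 0 i1 - (A i1 0 / A i0 0) *: delta_mx 0 i0).
  by apply/rV0Pn; exists i1; rewrite !mxE !eqxx /= mulr0 subr0 oner_neq0.
rewrite mulmxBl -scalemxAl -!rowE [row i1 A]mx11_scalar [row i0 A]mx11_scalar !mxE.
by rewrite scale_scalar_mx divrK ?subrr // D_division.
Qed.

Section Spanning.
Variables (P : 'M[D]_(n, m)) (S : 'M[D]_(m, n) -> Prop).
Hypotheses (S0 : S 0) (SD : forall x y, S x -> S y -> S (x + y))
  (SN : forall x, S x -> S (- x)).

Lemma rank1_span : (forall (u : 'cV[D]_m) (y : 'rV[D]_n), S (u *m y)) -> forall x, S x.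
Proof. by move=> Suy x; rewrite [x]mx_sum_rank1; apply: big_ind. Qed.

Lemma rank1_span_pairing : P != 0 ->
  (forall u w, pairing P w u = 1%:M -> forall y, S (u *m y)) -> forall x, S x.
Proof.
move=> P0 Sw; have Sgood (u : 'cV[D]_m) (y : 'rV[D]_n) : P *m u != 0 -> S (u *m y).
  by move=> Pu; have [w wu1] := pairing_unit Pu; apply: Sw wu1 y.
have [l Pd] := mx_neq0_delta_col P0; set d := delta_mx l 0 in Pd.
apply: rank1_span => u y; have [Pu0|Pu] := eqVneq (P *m u) 0; last exact: Sgood.
rewrite -[u *m y](addrK (d *m y)) -mulmxDl; apply: SD (SN (Sgood _ _ Pd)).
by apply: Sgood; rewrite mulmxDr Pu0 add0r.
Qed.

End Spanning.

Lemma gen_alg_idem (P : 'M[D]_(n, m)) : P != 0 -> forall x, gen_alg P (idemP P) x.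
Proof.
move=> P0; have [l Pd] := mx_neq0_delta_col P0.
set u0 := delta_mx l 0 : 'cV[D]_m; have [w0 w0u0] := pairing_unit Pd.
have e0 : gen_alg P (idemP P) (u0 *m w0) by apply/ga_base/idem_rank1.
(* u0 is a basis column, so a 1x1 factor on its right is a left D-scaling. *)
have u0M s : u0 *m s *m w0 = s 0 0 *: (u0 *m w0) by rewrite mul_delta_col_mx11 scalemxAl.
have row_u0 y : gen_alg P (idemP P) (u0 *m y).
  pose s := pairing P y u0.
  rewrite -[y](subrK (s *m w0)) mulmxDr mulmxA u0M; apply/ga_add/ga_scale/e0.
  apply/gen_ring_alg/(gen_ring_idem_rank1_orthr w0u0).
  by rewrite pairingBl pairingMl w0u0 mulmx1 subrr.
have col_w0 v : gen_alg P (idemP P) (v *m w0).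
  pose s := pairing P w0 v.
  rewrite -[v](subrK (u0 *m s)) mulmxDl u0M; apply/ga_add/ga_scale/e0.
  apply/gen_ring_alg/(gen_ring_idem_rank1_orthl w0u0).
  by rewrite pairingBr pairingMr w0u0 mul1mx subrr.
apply: rank1_span => [||u y]; [exact: ga_zero | exact: ga_add |].
by rewrite -[u](mulmx1 u) -w0u0 -bmul_rank1; apply: ga_mul.
Qed.

(* Q = P - (P u1)(w1 P) is nonzero as P is not of rank one; a pair normalised
   for Q, corrected along (u1, w1), is the required (u2, w2). *)
Lemma biorthogonal_extend (P : 'M[D]_(n, m)) u1 w1 :
  (forall (a : 'cV[D]_n) (b : 'rV[D]_m), P != a *m b) -> pairing P w1 u1 = 1%:M ->
  exists u2 w2, [/\ pairing P w1 u2 = 0, pairing P w2 u1 = 0 & pairing P w2 u2 = 1%:M].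
Proof.
move=> Prk w1u1; set Q := P - (P *m u1) *m (w1 *m P).
have pairingQ z v : pairing Q z v = pairing P z v - pairing P z u1 *m pairing P w1 v.
  by rewrite /pairing mulmxBr mulmxBl !mulmxA.
have Q0 : Q != 0 by rewrite subr_eq0 Prk.
have [l Qd] := mx_neq0_delta_col Q0; have [w wQ1] := pairing_unit Qd.
set v := delta_mx l 0 in wQ1.
have w1u2 : pairing P w1 (v - u1 *m pairing P w1 v) = 0.
  by rewrite pairingBr pairingMr w1u1 mul1mx subrr.
exists (v - u1 *m pairing P w1 v), (w - pairing P w u1 *m w1); split => //.
  by rewrite pairingBl pairingMl w1u1 mulmx1 subrr.
by rewrite pairingBl pairingMl w1u2 mulmx0 subr0 pairingBr pairingMr -pairingQ.
Qed.

End DivisionRing.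

Section Biorthogonal.
Variables (D : unitRingType) (m n : nat) (P : 'M[D]_(n, m)).
Variables (u1 u2 : 'cV[D]_m) (w1 w2 : 'rV[D]_n).
Hypotheses (w1u1 : pairing P w1 u1 = 1%:M) (w1u2 : pairing P w1 u2 = 0)
  (w2u1 : pairing P w2 u1 = 0) (w2u2 : pairing P w2 u2 = 1%:M).

Lemma row_decomp_biorthogonal y : exists2 z, pairing P z u1 = 0 /\ pairing P z u2 = 0 &
  y = z + pairing P y u1 *m w1 + pairing P y u2 *m w2.
Proof.
exists (y - pairing P y u1 *m w1 - pairing P y u2 *m w2); last by rewrite addrAC !subrK.
by rewrite !pairingBl !pairingMl w1u1 w1u2 w2u1 w2u2 !mulmx1 !mulmx0 !subr0 !subrr.
Qed.

Lemma gen_ring_idem_biorthogonal y : gen_ring P (idemP P) (u1 *m y).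
Proof.
have offdiag (a : 'M[D]_1) : gen_ring P (idemP P) (u1 *m a *m w2).
  rewrite -mulmxA; apply: gen_ring_idem_rank1_orthr w1u1 _.
  by rewrite pairingMl w2u1 mulmx0.
have diag (a : 'M[D]_1) : gen_ring P (idemP P) (u1 *m a *m w1).
  rewrite -[u1 *m a](mulmx1 (u1 *m a)) -w2u2 -bmul_rank1.
  by apply: gr_mul (offdiag a) _; apply: gen_ring_idem_rank1_orthl w1u1 w1u2.
have [z [zu1 _] ->] := row_decomp_biorthogonal y.
rewrite !mulmxDr [u1 *m (_ *m w1)]mulmxA [u1 *m (_ *m w2)]mulmxA.
apply: gr_add _ (offdiag _); apply: gr_add _ (diag _).
exact: gen_ring_idem_rank1_orthr w1u1 zu1.
Qed.

Lemma gen_add_jordan_offdiag a : gen_add (jordan_idem P) (u1 *m a *m w2).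
Proof. exact/gd_base/(jordan_idem_rank1 _ w1u1 w2u1 w2u2). Qed.

Lemma gen_add_jordan_orth z :
  pairing P z u1 = 0 -> pairing P z u2 = 0 -> gen_add (jordan_idem P) (u1 *m z).
Proof.
move=> zu1 zu2; rewrite -[z](addrK w2) mulmxBr -[u1](mulmx1 u1).
apply: gen_add_sub (gen_add_jordan_offdiag _).
apply/gd_base/(jordan_idem_rank1 (u := u2) _ w1u1).
  by rewrite pairingDl zu1 w2u1 addr0.
by rewrite pairingDl zu2 w2u2 add0r.
Qed.

(* With t = a / 2 and W = t w1 + (1 - t) w2, the Jordan product of the
   idempotents (u1 + u2) W and u1 w1 is u1 (2t) w1 + u2 t w1 + u1 (1 - t) w2. *)
Lemma gen_add_jordan_diag a : (2%:R : D) \is a GRing.unit ->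
  gen_add (jordan_idem P) (u1 *m a *m w1).
Proof.
move=> two_unit; pose t := (2%:R : D)^-1 *: a.
have t_double : t + t = a.
  by rewrite -scalerDl -[_ + _]mulr2n -(mulr_natr (2%:R^-1 : D) 2) mulVr ?scale1r.
pose W := t *m w1 + (1%:M - t) *m w2.
have Wu1 : pairing P W u1 = t.
  by rewrite pairingDl !pairingMl w1u1 w2u1 mulmx0 addr0 mulmx1.
have Wu12 : pairing P W (u1 + u2) = 1%:M.
  by rewrite pairingDr Wu1 pairingDl !pairingMl w1u2 w2u2 mulmx0 add0r mulmx1 addrC subrK.
have u2w1_jordan : gen_add (jordan_idem P) (u2 *m t *m w1).
  exact/gd_base/(jordan_idem_rank1 _ w2u2 w1u2 w1u1).
have jordan_eq : bmul P ((u1 + u2) *m W) (u1 *m w1) + bmul P (u1 *m w1) ((u1 + u2) *m W)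
    = u1 *m a *m w1 + u1 *m (1%:M - t) *m w2 + u2 *m t *m w1.
  rewrite !bmul_rank1 Wu1 pairingDr w1u1 w1u2 addr0 mulmx1 -t_double.
  by rewrite /W mulmxDr !mulmxA (mulmxDr u1 t t) !mulmxDl addrACA addrA addrAC.
have -> : u1 *m a *m w1 = bmul P ((u1 + u2) *m W) (u1 *m w1)
    + bmul P (u1 *m w1) ((u1 + u2) *m W) - u2 *m t *m w1 - u1 *m (1%:M - t) *m w2.
  by rewrite jordan_eq !addrK.
apply: gen_add_sub (gen_add_jordan_offdiag _); apply: gen_add_sub u2w1_jordan.
apply: gd_base; exists ((u1 + u2) *m W), (u1 *m w1).
by split; [exact: idem_rank1 | split; first exact: idem_rank1].
Qed.

Lemma gen_add_jordan_biorthogonal y : (2%:R : D) \is a GRing.unit ->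
  gen_add (jordan_idem P) (u1 *m y).
Proof.
move=> two_unit; have [z [zu1 zu2] ->] := row_decomp_biorthogonal y.
rewrite !mulmxDr [u1 *m (_ *m w1)]mulmxA [u1 *m (_ *m w2)]mulmxA.
apply: gd_add _ (gen_add_jordan_offdiag _).
apply: gd_add _ (gen_add_jordan_diag _ two_unit).
exact: gen_add_jordan_orth zu1 zu2.
Qed.

End Biorthogonal.

Lemma dr_rank_neq0 (D : unitRingType) (m n : nat) (P : 'M[D]_(n, m)) r :
  dr_rank P r -> (0 < r)%N -> P != 0.
Proof.
move=> [[f [_ Pf_indep]] _] r_gt0; apply/eqP => P0; pose i := Ordinal r_gt0.
have /matrixP/(_ 0 i)/eqP : (delta_mx 0 i : 'rV[D]_r) = 0.
  by apply: Pf_indep; rewrite P0 (_ : rowsub f 0 = 0) ?mulmx0 // mxsub_const.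
by rewrite !mxE !eqxx oner_eq0.
Qed.

Lemma dr_rank_not_rank1 (D : unitRingType) (m n : nat) (P : 'M[D]_(n, m)) r :
  division_ring D -> dr_rank P r -> (1 < r)%N ->
  forall (a : 'cV[D]_n) (b : 'rV[D]_m), P != a *m b.
Proof.
move=> D_division [[f [_ Pf_indep]] _] r_gt1 a b; apply/eqP => Pab.
have [c c_neq0 ca0] := cV_left_annihilator D_division (rowsub f a) r_gt1.
by move/eqP: c_neq0; apply; apply: Pf_indep; rewrite Pab -mul_rowsub_mx mulmxA ca0 mul0mx.
Qed.

Theorem theorem2p2 (D : unitRingType) (m n : nat) (P : 'M[D]_(n, m)) (r : nat) :
  division_ring D -> (2 <= m)%N -> (2 <= n)%N -> dr_rank P r ->
  ((1 <= r)%N -> forall x : 'M[D]_(m, n), gen_alg P (idemP P) x) /\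
  ((2 <= r)%N -> forall x : 'M[D]_(m, n), gen_ring P (idemP P) x) /\
  ((2 <= r)%N -> (2%:R : D) != 0 -> forall x : 'M[D]_(m, n), gen_add (jordan_idem P) x).
Proof.
move=> D_division _ _ P_rank.
have extend u w : (1 < r)%N -> pairing P w u = 1%:M ->
    exists u2 w2, [/\ pairing P w u2 = 0, pairing P w2 u = 0 & pairing P w2 u2 = 1%:M].
  by move=> r_gt1; apply: biorthogonal_extend (dr_rank_not_rank1 D_division P_rank r_gt1).
split; last split.
- by move=> r_gt0; apply: gen_alg_idem (dr_rank_neq0 P_rank r_gt0).
- move=> r_gt1; apply: (rank1_span_pairing D_division) => [||||u w wu1 y].
  + exact: gr_zero.
  + exact: gr_add.
  + exact: gr_opp.
  + exact: dr_rank_neq0 P_rank (ltnW r_gt1).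
  have [u2 [w2 [wu2 w2u w2u2]]] := extend u w r_gt1 wu1.
  exact: gen_ring_idem_biorthogonal wu1 wu2 w2u w2u2 y.
- move=> r_gt1 two_neq0; apply: (rank1_span_pairing D_division) => [||||u w wu1 y].
  + exact: gd_zero.
  + exact: gd_add.
  + exact: gd_opp.
  + exact: dr_rank_neq0 P_rank (ltnW r_gt1).
  have [u2 [w2 [wu2 w2u w2u2]]] := extend u w r_gt1 wu1.
  exact: gen_add_jordan_biorthogonal wu1 wu2 w2u w2u2 y (D_division _ two_neq0).
Qed.
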